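(* Let $G_1,\dots,G_K$ be a partition of $[n]$ with $n_k=|G_k|\ge1$, and let $U_1^\ast\in\mathbb R^{n\times K}$ have $k$-th column $\frac{1}{\sqrt{n_k}}\mathbf 1_{G_k}$. There exists $R_3>0$ such that for every $\Delta_1\in\mathbb R^{n\times K}$ satisfying $(U_1^\ast)_{ij}=0\Rightarrow(\Delta_1)_{ij}=0$, $$\|\Delta_1(U_1^\ast)^T\mathbf 1_n+U_1^\ast\Delta_1^T\mathbf 1_n\|_F^2\ge R_3\|\Delta_1\|_F^2.$$
   Context: $\mathbf 1_{G_k}\in\mathbb R^n$ is the indicator vector of $G_k$ and $\mathbf 1_n$ the all-ones vector. *)

From mathcomp Require Import all_boot all_order all_algebra.
From mathcomp Require Import reals.
Set Implicit Arguments. Unset Strict Implicit. Unset Printing Implicit Defensive.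
Import Order.TTheory GRing.Theory Num.Theory.
Local Open Scope ring_scope.

Definition is_partition (n K : nat) (G : 'I_K -> {set 'I_n}) : Prop :=
  (forall k l : 'I_K, k != l -> [disjoint G k & G l]) /\
  (forall i : 'I_n, exists k : 'I_K, i \in G k).

Definition U1star (R : realType) (n K : nat) (G : 'I_K -> {set 'I_n})
  : 'M[R]_(n, K) :=
  \matrix_(i, k) ((i \in G k)%:R / Num.sqrt (#|G k|%:R)).

Definition frob2 (R : realType) (m p : nat) (A : 'M[R]_(m, p)) : R :=
  \sum_(i < m) \sum_(j < p) (A i j) ^+ 2.

Definition ones (R : realType) (n : nat) : 'cV[R]_n := const_mx 1.

(* For i in G_k the i-th entry of Delta1 U^T 1 + U Delta1^T 1 is
   sqrt(n_k) Delta1_ik + s_k / sqrt(n_k), where s_k is the sum of Delta1 over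
   G_k in column k. Summing squares over G_k gives n_k |Delta1_(.,k)|^2 + 3 s_k^2,
   which dominates |Delta1_(.,k)|^2 since n_k >= 1; hence R3 = 1 works. *)

From mathcomp Require Import all_boot all_order all_algebra.
From mathcomp Require Import reals.
From mathcomp Require Import ring lra.
Set Implicit Arguments. Unset Strict Implicit. Unset Printing Implicit Defensive.
Import Order.TTheory GRing.Theory Num.Theory.
Local Open Scope ring_scope.

Section Partition.

Variables (n K : nat) (G : 'I_K -> {set 'I_n}).
Hypothesis hG : is_partition G.

Lemma partition_uniq i k l : i \in G k -> i \in G l -> k = l.
Proof.
move=> ik il; apply/eqP/negPn/negP => nkl.
by rewrite (disjointFr (hG.1 k l nkl) ik) in il.
Qed.

Lemma sum_partition_row (V : nmodType) i k (F : 'I_K -> V) :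
  i \in G k -> (forall l, i \notin G l -> F l = 0) -> \sum_l F l = F k.
Proof.
move=> ik F0; rewrite (bigD1 k) //= big1 ?addr0 // => l nlk.
by apply: F0; apply: contra nlk => il; rewrite (partition_uniq ik il).
Qed.

Lemma sum_partition (V : nmodType) (F : 'I_n -> V) :
  \sum_i F i = \sum_k \sum_(i in G k) F i.
Proof.
under [RHS]eq_bigr do rewrite big_mkcond.
rewrite exchange_big; apply: eq_bigr => i _ /=.
have [k ik] := hG.2 i.
by rewrite (sum_partition_row ik) ?ik // => l /negbTE ->.
Qed.

End Partition.

Lemma mulmx_onesE (R : realType) m p (A : 'M[R]_(m, p)) i :
  (A *m ones R p) i 0 = \sum_j A i j.
Proof. by rewrite mxE; apply: eq_bigr => j _; rewrite mxE mulr1. Qed.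

Lemma sum_sqr_add_mean (F : fieldType) (I : finType) (A : {pred I})
    (x : I -> F) (r : F) :
  r ^+ 2 = #|A|%:R -> r != 0 ->
  \sum_(i in A) (x i * r + (\sum_(j in A) x j) / r) ^+ 2
    = r ^+ 2 * \sum_(i in A) x i ^+ 2 + 3 * (\sum_(j in A) x j) ^+ 2.
Proof.
move=> r2 r0; set s := \sum_(j in A) x j.
have expand i :
  (x i * r + s / r) ^+ 2 = r ^+ 2 * x i ^+ 2 + 2 * s * x i + s ^+ 2 / r ^+ 2.
  by field.
rewrite (eq_bigr _ (fun i _ => expand i)) !big_split /= -mulr_sumr -mulr_sumr.
by rewrite sumr_const -[_ *+ #|A|]mulr_natr -r2 -/s; field.
Qed.

Section SupportedPerturbation.

Variables (R : realType) (n K : nat) (G : 'I_K -> {set 'I_n}).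
Hypotheses (hG : is_partition G) (hne : forall k, (0 < #|G k|)%N).
Variable D : 'M[R]_(n, K).
Hypothesis hD : forall i j, U1star R G i j = 0 -> D i j = 0.

Let r k : R := Num.sqrt #|G k|%:R.

Lemma sqrt_card_gt0 k : 0 < r k.
Proof. by rewrite sqrtr_gt0 ltr0n hne. Qed.

Lemma sqr_sqrt_card k : r k ^+ 2 = #|G k|%:R.
Proof. by rewrite sqr_sqrtr ?ler0n. Qed.

Lemma U1starE i k : U1star R G i k = (i \in G k)%:R / r k.
Proof. by rewrite mxE. Qed.

Lemma U1star_out i k : i \notin G k -> U1star R G i k = 0.
Proof. by move/negbTE => ik; rewrite U1starE ik mul0r. Qed.

Lemma sum_col_U1star k : \sum_i U1star R G i k = r k.
Proof.
under eq_bigr do rewrite U1starE.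
rewrite -mulr_suml -natr_sum.
have -> : (\sum_i (i \in G k : nat))%N = #|G k|.
  by rewrite -sum1_card [RHS]big_mkcond.
by rewrite -sqr_sqrt_card expr2 mulfK ?lt0r_neq0 ?sqrt_card_gt0.
Qed.

Lemma D_out i k : i \notin G k -> D i k = 0.
Proof. by move/U1star_out/hD. Qed.

Lemma U1starT_ones k : ((U1star R G)^T *m ones R n) k 0 = r k.
Proof.
by rewrite mulmx_onesE -sum_col_U1star; apply: eq_bigr => i _; rewrite mxE.
Qed.

Lemma DT_ones k : (D^T *m ones R n) k 0 = \sum_(i in G k) D i k.
Proof.
rewrite mulmx_onesE [RHS]big_mkcond; apply: eq_bigr => i _.
by rewrite mxE; case: ifP => // /negbT /D_out.
Qed.

Lemma sym_ones_entry i k : i \in G k ->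
  (D *m (U1star R G)^T *m ones R n + U1star R G *m D^T *m ones R n) i 0
    = D i k * r k + (\sum_(m in G k) D m k) / r k.
Proof.
move=> ik; rewrite -!mulmxA mxE [X in X + _]mxE [X in _ + X]mxE.
rewrite !(sum_partition_row hG ik).
- by rewrite U1starT_ones DT_ones U1starE ik div1r [_^-1 * _]mulrC.
- by move=> l il; rewrite U1star_out ?mul0r.
- by move=> l il; rewrite D_out ?mul0r.
Qed.

Lemma frob2_partition m (A : 'M[R]_(n, m)) :
  frob2 A = \sum_k \sum_(i in G k) \sum_j A i j ^+ 2.
Proof. exact: sum_partition. Qed.

Lemma frob2_le_sym_ones :
  frob2 D
    <= frob2 (D *m (U1star R G)^T *m ones R n + U1star R G *m D^T *m ones R n).
Proof.
rewrite !frob2_partition; apply: ler_sum => k _.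
have row_k i : i \in G k -> \sum_j D i j ^+ 2 = D i k ^+ 2.
  by move=> ik; rewrite (sum_partition_row hG ik) // => l /D_out ->; rewrite expr0n.
rewrite (eq_bigr _ row_k).
under [leRHS]eq_bigr => i ik do rewrite big_ord1 (sym_ones_entry ik).
rewrite sum_sqr_add_mean ?sqr_sqrt_card ?lt0r_neq0 ?sqrt_card_gt0 //.
have nk1 : 1 <= (#|G k|%:R : R) by rewrite ler1n hne.
have Q0 : 0 <= \sum_(i in G k) D i k ^+ 2 by apply: sumr_ge0 => i _; apply: sqr_ge0.
have := sqr_ge0 (\sum_(m in G k) D m k); nra.
Qed.

End SupportedPerturbation.

Theorem lemma17 (R : realType) (n K : nat) (G : 'I_K -> {set 'I_n})
  (hG : is_partition G) (hne : forall k : 'I_K, (0 < #|G k|)%N) :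
  exists R3 : R, 0 < R3 /\
    forall Delta1 : 'M[R]_(n, K),
      (forall (i : 'I_n) (j : 'I_K), U1star R G i j = 0 -> Delta1 i j = 0) ->
      frob2 (Delta1 *m (U1star R G)^T *m ones R n
             + U1star R G *m Delta1^T *m ones R n)
      >= R3 * frob2 Delta1.
Proof.
exists 1; split; first exact: ltr01.
by move=> D hD; rewrite mul1r; apply: frob2_le_sym_ones.
Qed.
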